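(* Let $l_1$ be a sufficiently large perfect square and put $N_1 = 2^{\sqrt{l_1}}$. Define sequences $(N_j)_{j\ge 1}$ and $(l_j)_{j \ge 1}$ recursively by \[ N_{j+1} = \big(\lfloor \sqrt{N_j}\rfloor\big)! \quad\text{and}\quad l_{j+1} = l_j \cdot N_j \qquad (j \ge 1). \] Then \[ \lim_{j\to\infty} \frac{\log N_j}{\sqrt{l_j}} = 0 \quad\text{and}\quad \lim_{j\to\infty} \frac{\log N_j}{l_j^{\beta}} = \infty \ \text{ for every } \beta < 1/2. \] *)

From Stdlib Require Import Reals Arith.
From Coquelicot Require Import Coquelicot.

(* Nl l1 j = (N_{j+1}, l_{j+1}) in the paper's 1-based indexing:
   N_1 = 2^(sqrt l1), l_1 = l1,
   N_{j+1} = (floor (sqrt N_j))!,  l_{j+1} = l_j * N_j. *)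
Fixpoint Nl (l1 : nat) (j : nat) : nat * nat :=
  match j with
  | O => (2 ^ Nat.sqrt l1, l1)%nat
  | S j' => let p := Nl l1 j' in (fact (Nat.sqrt (fst p)), (snd p * fst p)%nat)
  end.

Definition Nseq (l1 j : nat) : nat := fst (Nl l1 j).
Definition lseq (l1 j : nat) : nat := snd (Nl l1 j).

From Stdlib Require Import Reals Arith Lia Lra.
From Coquelicot Require Import Coquelicot.

(* Write k_j = floor (sqrt N_j), so that N_(j+1) = k_j!.  Since 3^k <= k! <= k^k,
   log N_(j+1) lies between k_j and k_j log k_j <= sqrt N_j (log N_j) / 2, while
   sqrt l_(j+1) = sqrt l_j sqrt N_j: the ratio log N_j / sqrt l_j at least halves at
   every step.  On the other hand l_(j+1) = l_j N_j <= N_j^2 <= (k_j + 1)^4 is only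
   polylogarithmic in N_(j+1), so l_(j+2)^beta <= (1 + log N_(j+1))^2 N_(j+1)^beta
   while log N_(j+2) >= sqrt N_(j+1) - 1, and the quotient grows like
   N_(j+1)^(1/2 - beta) up to logarithmic factors.
   All of this only needs N_1 >= 64 and l_1 <= N_1, which hold as soon as l_1 >= 36;
   l_1 need not be a perfect square. *)

Lemma fact_le_pow_self k : (fact k <= k ^ k)%nat.
Proof.
  induction k as [|k IH]; simpl; [lia|].
  assert (k ^ k <= S k ^ k)%nat by (apply Nat.pow_le_mono_l; lia).
  nia.
Qed.

Lemma pow3_le_fact k : (7 <= k)%nat -> (3 ^ k <= fact k)%nat.
Proof.
  induction 1 as [|k Hk IH].
  - apply Nat.leb_le; vm_compute; reflexivity.
  - change (fact (S k)) with (S k * fact k)%nat. rewrite Nat.pow_succ_r'. nia.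
Qed.

Lemma pow4_succ_le_fact k : (7 <= k)%nat -> ((k + 1) ^ 4 <= fact k)%nat.
Proof.
  induction 1 as [|k Hk IH].
  - apply Nat.leb_le; vm_compute; reflexivity.
  - change (fact (S k)) with (S k * fact k)%nat.
    assert (Hsq : ((k + 2) * (k + 2) <= 2 * ((k + 1) * (k + 1)))%nat) by nia.
    assert (H4 : ((S k + 1) ^ 4 <= 4 * (k + 1) ^ 4)%nat).
    { replace (S k + 1)%nat with (k + 2)%nat by lia. simpl. nia. }
    nia.
Qed.

Lemma sqr_succ_le_pow2 s : (6 <= s)%nat -> ((s + 1) * (s + 1) <= 2 ^ s)%nat.
Proof.
  induction 1 as [|s Hs IH]; [simpl; lia|].
  rewrite Nat.pow_succ_r'. nia.
Qed.

Lemma sqr_le_pow4_succ_sqrt N : (N * N <= (Nat.sqrt N + 1) ^ 4)%nat.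
Proof.
  destruct (Nat.sqrt_spec N ltac:(lia)) as [_ HN].
  replace (Nat.sqrt N + 1)%nat with (S (Nat.sqrt N)) by lia. simpl in *. nia.
Qed.

Lemma sqrt_ge8 N : (64 <= N)%nat -> (8 <= Nat.sqrt N)%nat.
Proof. intros H. change 8%nat with (Nat.sqrt 64). now apply Nat.sqrt_le_mono. Qed.

Lemma INR_sqrt_le_sqrt_INR n : INR (Nat.sqrt n) <= sqrt (INR n).
Proof.
  destruct (Nat.sqrt_spec n ltac:(lia)) as [Hn _].
  rewrite <- (sqrt_square (INR (Nat.sqrt n))) by apply pos_INR.
  apply sqrt_le_1_alt. rewrite <- mult_INR. now apply le_INR.
Qed.

Lemma sqrt_INR_lt_INR_sqrt_succ n : sqrt (INR n) < INR (Nat.sqrt n) + 1.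
Proof.
  destruct (Nat.sqrt_spec n ltac:(lia)) as [_ Hn].
  assert (Hk := pos_INR (Nat.sqrt n)).
  rewrite <- (sqrt_square (INR (Nat.sqrt n) + 1)) by lra.
  apply sqrt_lt_1_alt. split; [apply pos_INR|].
  rewrite <- S_INR, <- mult_INR. now apply lt_INR.
Qed.

Lemma ln_INR_nonneg n : (1 <= n)%nat -> 0 <= ln (INR n).
Proof.
  intros H. rewrite <- ln_1. apply ln_le; [lra|].
  apply (le_INR 1) in H. simpl in H. lra.
Qed.

Lemma INR_le_ln_fact k : (7 <= k)%nat -> INR k <= ln (INR (fact k)).
Proof.
  intros Hk.
  assert (H3 : 3 ^ k <= INR (fact k)).
  { replace 3 with (INR 3) by (simpl; lra). rewrite <- pow_INR.
    apply le_INR, pow3_le_fact, Hk. }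
  assert (Hln3 : 1 <= ln 3).
  { rewrite <- (ln_exp 1). apply ln_le; [apply exp_pos | apply exp_le_3]. }
  apply ln_le in H3; [|apply pow_lt; lra].
  rewrite ln_pow in H3 by lra.
  pose proof (pos_INR k). nra.
Qed.

Lemma ln_fact_sqrt_le N : (1 <= N)%nat ->
  ln (INR (fact (Nat.sqrt N))) <= sqrt (INR N) * (ln (INR N) / 2).
Proof.
  intros HN.
  set (k := Nat.sqrt N).
  assert (Hk1 : (1 <= k)%nat).
  { unfold k. change 1%nat with (Nat.sqrt 1). now apply Nat.sqrt_le_mono. }
  assert (Hk : 1 <= INR k) by (apply (le_INR 1) in Hk1; simpl in Hk1; lra).
  assert (Hfact : ln (INR (fact k)) <= INR k * ln (INR k)).
  { rewrite <- ln_pow by lra. apply ln_le; [apply lt_0_INR, lt_O_fact|].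
    rewrite <- pow_INR. apply le_INR, fact_le_pow_self. }
  assert (Hkk : INR k * INR k <= INR N).
  { rewrite <- mult_INR. apply le_INR, Nat.sqrt_spec. lia. }
  assert (Hln : 2 * ln (INR k) <= ln (INR N)).
  { replace 2 with (INR 2) by (simpl; lra). rewrite <- ln_pow by lra.
    apply ln_le; simpl; nra. }
  pose proof (INR_sqrt_le_sqrt_INR N) as Hsqrt. fold k in Hsqrt.
  pose proof (ln_INR_nonneg k Hk1).
  apply (Rle_trans _ _ _ Hfact). apply Rmult_le_compat; lra.
Qed.

Lemma exp_ge_cube (e t : R) : 0 < e <= 3 -> 0 <= t ->
  (e / 3) ^ 3 * (1 + t) ^ 3 <= exp (e * t).
Proof.
  intros He Ht.
  set (u := e * t / 3).
  assert (Hexp : exp (e * t) = exp u ^ 3).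
  { simpl. rewrite Rmult_1_r, <- !exp_plus. f_equal. unfold u. field. }
  rewrite Hexp, <- Rpow_mult_distr. apply pow_incr. split.
  - apply Rmult_le_pos; lra.
  - apply Rle_trans with (1 + u); [unfold u; nra | apply exp_ineq1_le].
Qed.

Lemma Rpower_le_sqrt x g : 1 <= x -> g <= 1 / 2 -> Rpower x g <= sqrt x.
Proof.
  intros Hx Hg. rewrite <- Rpower_sqrt by lra.
  apply Rle_Rpower; lra.
Qed.

Lemma quotient_lower_bound (N L a g : R) :
  64 <= N -> 1 <= L <= (1 + ln N) ^ 4 -> sqrt N - 1 <= a -> 0 <= g < 1 / 2 ->
  ((1 / 2 - g) / 3) ^ 3 / 2 * (1 + ln N) <= a / Rpower (L * N) g.
Proof.
  intros HN HL Ha Hg.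
  set (t := ln N). set (e := 1 / 2 - g).
  assert (Ht : 0 <= t) by (unfold t; rewrite <- ln_1; apply ln_le; lra).
  assert (HsN : 8 <= sqrt N).
  { rewrite <- (sqrt_square 8) by lra. apply sqrt_le_1_alt. lra. }
  assert (HP : 0 < Rpower N g) by apply exp_pos.
  assert (HQ : 0 < Rpower L g) by apply exp_pos.
  assert (HPE : Rpower N g * exp (e * t) = sqrt N).
  { change (exp (e * t)) with (Rpower N e).
    rewrite <- Rpower_plus, <- Rpower_sqrt by lra. f_equal. unfold e. lra. }
  assert (HQt : Rpower L g <= (1 + t) ^ 2).
  { apply Rle_trans with (sqrt L); [apply Rpower_le_sqrt; lra|].
    rewrite <- (sqrt_pow2 ((1 + t) ^ 2)) by (apply pow_le; lra).
    apply sqrt_le_1_alt. rewrite <- pow_mult. unfold t in *. simpl Nat.mul. lra. }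
  (* N^g exp (e t) = sqrt N, and the cube in exp (e t) >= (e (1 + t) / 3)^3
     absorbs the factor (1 + t)^2 bounding L^g. *)
  pose proof (exp_ge_cube e t ltac:(unfold e; lra) Ht) as Hcube.
  rewrite <- Rpower_mult_distr by lra.
  apply (Rle_div_r _ _ _ (Rmult_lt_0_compat _ _ HQ HP)).
  apply Rle_trans with ((e / 3) ^ 3 * (1 + t) ^ 3 / 2 * Rpower N g).
  - replace ((e / 3) ^ 3 * (1 + t) ^ 3 / 2 * Rpower N g)
      with ((e / 3) ^ 3 / 2 * (1 + t) * ((1 + t) ^ 2 * Rpower N g)) by (unfold Rdiv; ring).
    apply Rmult_le_compat_l.
    + apply Rmult_le_pos; [|lra]. apply Rmult_le_pos; [apply pow_le; unfold e|]; lra.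
    + apply Rmult_le_compat_r; lra.
  - nra.
Qed.

Section Sequences.

Variable l1 : nat.
Hypothesis l1_ge36 : (36 <= l1)%nat.

Lemma Nseq_S j : Nseq l1 (S j) = fact (Nat.sqrt (Nseq l1 j)).
Proof. reflexivity. Qed.

Lemma lseq_S j : lseq l1 (S j) = (lseq l1 j * Nseq l1 j)%nat.
Proof. reflexivity. Qed.

Lemma Nseq_lseq_bounds j :
  (64 <= Nseq l1 j /\ 1 <= lseq l1 j <= Nseq l1 j /\ j <= Nseq l1 j)%nat.
Proof.
  induction j as [|j IH].
  - unfold Nseq, lseq; simpl.
    assert (Hs : (6 <= Nat.sqrt l1)%nat).
    { change 6%nat with (Nat.sqrt 36). now apply Nat.sqrt_le_mono. }
    pose proof (Nat.sqrt_spec l1 ltac:(lia)) as [_ Hl1].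
    pose proof (sqr_succ_le_pow2 _ Hs).
    assert (2 ^ 6 <= 2 ^ Nat.sqrt l1)%nat by (apply Nat.pow_le_mono_r; lia).
    simpl in *. lia.
  - rewrite Nseq_S, lseq_S. destruct IH as (HN & Hl & Hj).
    pose proof (sqr_le_pow4_succ_sqrt (Nseq l1 j)).
    pose proof (pow4_succ_le_fact (Nat.sqrt (Nseq l1 j)) ltac:(pose proof (sqrt_ge8 _ HN); lia)).
    nia.
Qed.

Lemma lseq_S_le_pow4 j : (lseq l1 (S j) <= (Nat.sqrt (Nseq l1 j) + 1) ^ 4)%nat.
Proof.
  destruct (Nseq_lseq_bounds j) as (_ & Hl & _).
  rewrite lseq_S. pose proof (sqr_le_pow4_succ_sqrt (Nseq l1 j)). nia.
Qed.

Lemma sqrt_Nseq_le_ln_Nseq_S j :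
  INR (Nat.sqrt (Nseq l1 j)) <= ln (INR (Nseq l1 (S j))).
Proof.
  destruct (Nseq_lseq_bounds j) as (HN & _).
  rewrite Nseq_S. apply INR_le_ln_fact. pose proof (sqrt_ge8 _ HN). lia.
Qed.

Lemma lseq_S_le_ln_Nseq_S j :
  INR (lseq l1 (S j)) <= (1 + ln (INR (Nseq l1 (S j)))) ^ 4.
Proof.
  apply Rle_trans with (INR ((Nat.sqrt (Nseq l1 j) + 1) ^ 4)).
  - apply le_INR, lseq_S_le_pow4.
  - rewrite pow_INR, plus_INR. apply pow_incr. split.
    + apply Rplus_le_le_0_compat; [apply pos_INR | simpl; lra].
    + pose proof (sqrt_Nseq_le_ln_Nseq_S j). simpl. lra.
Qed.

Lemma is_lim_seq_ln_Nseq : is_lim_seq (fun j => ln (INR (Nseq l1 j))) p_infty.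
Proof.
  apply (is_lim_comp_seq ln (fun j => INR (Nseq l1 j)) p_infty p_infty).
  - exact is_lim_ln_p.
  - exists 0%nat. discriminate.
  - apply (is_lim_seq_le_p_loc INR); [|exact is_lim_seq_INR].
    exists 0%nat. intros j _. apply le_INR, Nseq_lseq_bounds.
Qed.

Lemma ln_Nseq_sqrt_lseq_halves j :
  ln (INR (Nseq l1 (S j))) / sqrt (INR (lseq l1 (S j))) <=
  (ln (INR (Nseq l1 j)) / sqrt (INR (lseq l1 j))) / 2.
Proof.
  destruct (Nseq_lseq_bounds j) as (HN & Hl & _).
  assert (HsN : 0 < sqrt (INR (Nseq l1 j))) by (apply sqrt_lt_R0, lt_0_INR; lia).
  assert (Hsl : 0 < sqrt (INR (lseq l1 j))) by (apply sqrt_lt_R0, lt_0_INR; lia).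
  rewrite Nseq_S, lseq_S, mult_INR, sqrt_mult by apply pos_INR.
  apply Rle_trans with
    (sqrt (INR (Nseq l1 j)) * (ln (INR (Nseq l1 j)) / 2)
      / (sqrt (INR (lseq l1 j)) * sqrt (INR (Nseq l1 j)))).
  - unfold Rdiv at 1 3. apply Rmult_le_compat_r.
    + left. apply Rinv_0_lt_compat, Rmult_lt_0_compat; assumption.
    + apply ln_fact_sqrt_le. lia.
  - right. field. lra.
Qed.

Lemma ln_Nseq_sqrt_lseq_nonneg j :
  0 <= ln (INR (Nseq l1 j)) / sqrt (INR (lseq l1 j)).
Proof.
  destruct (Nseq_lseq_bounds j) as (HN & Hl & _).
  apply Rdiv_le_0_compat; [apply ln_INR_nonneg; lia|].
  apply sqrt_lt_R0, lt_0_INR. lia.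
Qed.

Lemma is_lim_seq_ln_Nseq_sqrt_lseq :
  is_lim_seq (fun j => ln (INR (Nseq l1 j)) / sqrt (INR (lseq l1 j))) 0.
Proof.
  set (r := fun j => ln (INR (Nseq l1 j)) / sqrt (INR (lseq l1 j))).
  assert (Hgeom : forall j, r j <= r 0%nat * (1 / 2) ^ j).
  { induction j as [|j IH]; [simpl; lra|].
    pose proof (ln_Nseq_sqrt_lseq_halves j). fold (r j) (r (S j)) in H.
    simpl. lra. }
  apply (is_lim_seq_le_le (fun _ => 0) r (fun j => r 0%nat * (1 / 2) ^ j)).
  - intros j. split; [apply ln_Nseq_sqrt_lseq_nonneg | apply Hgeom].
  - apply is_lim_seq_const.
  - replace (Finite 0) with (Rbar_mult (r 0%nat) 0) by (simpl; f_equal; ring).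
    apply is_lim_seq_scal_l, is_lim_seq_geom. rewrite Rabs_pos_eq; lra.
Qed.

Lemma ln_Nseq_Rpower_lseq_ge g j : 0 <= g < 1 / 2 ->
  ((1 / 2 - g) / 3) ^ 3 / 2 * (1 + ln (INR (Nseq l1 (S j)))) <=
  ln (INR (Nseq l1 (S (S j)))) / Rpower (INR (lseq l1 (S (S j)))) g.
Proof.
  intros Hg. destruct (Nseq_lseq_bounds (S j)) as (HN & [Hl _] & _).
  rewrite (lseq_S (S j)), mult_INR.
  apply quotient_lower_bound; [| split | | exact Hg].
  - apply (le_INR 64) in HN. simpl in HN. lra.
  - apply (le_INR 1) in Hl. simpl in Hl. lra.
  - apply lseq_S_le_ln_Nseq_S.
  - pose proof (sqrt_INR_lt_INR_sqrt_succ (Nseq l1 (S j))).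
    pose proof (sqrt_Nseq_le_ln_Nseq_S (S j)). lra.
Qed.

Lemma is_lim_seq_ln_Nseq_Rpower_lseq beta : beta < 1 / 2 ->
  is_lim_seq (fun j => ln (INR (Nseq l1 j)) / Rpower (INR (lseq l1 j)) beta) p_infty.
Proof.
  intros Hbeta.
  set (g := Rmax beta 0).
  assert (Hg : 0 <= g < 1 / 2) by (unfold g; split; [apply Rmax_r | apply Rmax_lub_lt; lra]).
  set (c := ((1 / 2 - g) / 3) ^ 3 / 2).
  assert (Hc : 0 < c) by (unfold c; apply Rdiv_lt_0_compat; [apply pow_lt|]; lra).
  apply (is_lim_seq_incr_n _ 2).
  apply (is_lim_seq_le_p_loc (fun j => ln (INR (Nseq l1 (S j))) * c)).
  - exists 0%nat. intros j _. replace (j + 2)%nat with (S (S j)) by lia.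
    destruct (Nseq_lseq_bounds (S j)) as (HN & _).
    destruct (Nseq_lseq_bounds (S (S j))) as (HN2 & [Hl2 _] & _).
    assert (Hl : 1 <= INR (lseq l1 (S (S j)))) by (apply (le_INR 1) in Hl2; simpl in Hl2; lra).
    apply Rle_trans with (c * (1 + ln (INR (Nseq l1 (S j))))).
    + pose proof (ln_INR_nonneg (Nseq l1 (S j)) ltac:(lia)). nra.
    + apply (Rle_trans _ _ _ (ln_Nseq_Rpower_lseq_ge g j Hg)).
      apply Rmult_le_compat_l; [apply ln_INR_nonneg; lia|].
      apply Rinv_le_contravar; [apply exp_pos|].
      apply Rle_Rpower; [exact Hl | apply Rmax_l].
  - apply (is_lim_seq_mult _ _ p_infty c).
    + apply (is_lim_seq_incr_1 (fun j => ln (INR (Nseq l1 j)))), is_lim_seq_ln_Nseq.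
    + apply is_lim_seq_const.
    + apply is_Rbar_mult_p_infty_pos. exact Hc.
Qed.

End Sequences.

Theorem lemma3p1 :
  exists L : nat, forall l1 : nat, (L <= l1)%nat -> (exists m : nat, l1 = (m * m)%nat) ->
    is_lim_seq (fun j => (ln (INR (Nseq l1 j)) / sqrt (INR (lseq l1 j)))%R) 0%R /\
    (forall beta : R, (beta < 1 / 2)%R ->
       is_lim_seq (fun j => (ln (INR (Nseq l1 j)) / Rpower (INR (lseq l1 j)) beta)%R) p_infty).
Proof.
  exists 36%nat. intros l1 Hl1 _. split.
  - exact (is_lim_seq_ln_Nseq_sqrt_lseq l1 Hl1).
  - exact (is_lim_seq_ln_Nseq_Rpower_lseq l1 Hl1).
Qed.
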